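(* Let $k$ be a field of characteristic $0$ and $C$ a finite set. Consider the post-Lie-Rinehart algebra $(k,\mathrm{Lie}(\mathcal{T}_C),[-,-],\curvearrowright)$ (scalars $k$, zero anchor). Its algebra of elementary module endomorphisms $\mathrm{El}_k(\mathrm{Lie}(\mathcal{T}_C))$ equals the subalgebra of $(\mathrm{End}_k(\mathrm{Lie}(\mathcal{T}_C)),\circ)$ generated by $\hat{\mathcal{T}}^0_C$ (trees with a free edge at the root, acting as endomorphisms) together with $\delta(\mathrm{Lie}(\mathcal{T}_C))=\{\delta_x : x\in\mathrm{Lie}(\mathcal{T}_C)\}$, where $\delta_x(\eta)=[x,\eta]$.
   Context: Planar trees: $T_C$ is the set of planar rooted trees with vertices decorated by $C$; for $c\in C$ and an ordered (possibly empty) list $t_1,\dots,t_p\in T_C$, $B_c(t_1\cdots t_p)$ denotes the tree whose root is decorated by $c$ and whose ordered children subtrees are $t_1,\dots,t_p$; $\mathcal{T}_C=\mathrm{span}_k(T_C)$. Left grafting: $t_2\curvearrowright t_1=\sum_{v\in V(t_1)}t_2\curvearrowright_v t_1$, where $t_2\curvearrowright_v t_1$ attaches the root of $t_2$ to the vertex $v$ of $t_1$ as its new leftmost child. $\mathrm{Lie}(\mathcal{T}_C)$ is the free Lie algebra on the vector space $\mathcal{T}_C$, and $\curvearrowright$ is extended by $t_3\curvearrowright[t_2,t_1]=[t_3\curvearrowright t_2,t_1]+[t_2,t_3\curvearrowright t_1]$, $[t_3,t_2]\curvearrowright t_1=\mathrm{Ass}(t_3,t_2,t_1)-\mathrm{Ass}(t_2,t_3,t_1)$,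 $\mathrm{Ass}(a,b,c)=a\curvearrowright(b\curvearrowright c)-(a\curvearrowright b)\curvearrowright c$; this makes $\mathrm{Lie}(\mathcal{T}_C)$ a post-Lie algebra. Extend $\curvearrowright$ to a left action of the universal enveloping algebra $U$ of $(\mathrm{Lie}(\mathcal{T}_C),[-,-])$ (product $\cdot$) by $\mathbf 1\curvearrowright y=y$, $x\curvearrowright(w_1\cdot w_2)=(x\curvearrowright w_1)\cdot w_2+w_1\cdot(x\curvearrowright w_2)$, $(x\cdot w)\curvearrowright y=x\curvearrowright(w\curvearrowright y)-(x\curvearrowright w)\curvearrowright y$ for $x\in\mathrm{Lie}(\mathcal{T}_C)$, $w\in U$; then $B_c(t_1\cdots t_p)=(t_1\cdots t_p)\curvearrowright\bullet_c$. A tree with a free edge at the root is $B_c(t_1\cdots t_{j-1}\times t_j\cdots t_p)$, i.e. a tree with one additional empty input slot $\times$ at a specified position among the root's children; it acts as the endomorphism $x\mapsto (t_1\cdots t_{j-1}\cdot x\cdot t_j\cdots t_p)\curvearrowright\bullet_c$. $\hat{\mathcal{T}}^0_C$ is the span of these. For this post-Lie-Rinehart algebra (with scalars $k$ acting trivially), the connection is $\curvearrowright$, the torsion is $T(x,y)=-[x,y]$, $dX(Z)=Z\curvearrowright X$, $\delta X(Z)=T(Z,X)=[X,Z]$, $(\hat\nabla_X\nu)(Y)=X\curvearrowright\nu(Y)-\nu(X\curvearrowright Y)$, and $\mathrm{El}_k$ is the subalgebra of $\mathrm{End}_k$ generated by all $\hat\nabla_{X_1}\cdots\hat\nabla_{X_m}dY$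 and $\hat\nabla_{X_1}\cdots\hat\nabla_{X_m}\delta Y$, $m\ge0$. *)

From HB Require Import structures.
From mathcomp Require Import all_boot all_algebra.
From mathcomp Require Import freeg.
From Stdlib Require Import ClassicalEpsilon.

Set Implicit Arguments.
Unset Strict Implicit.
Unset Printing Implicit Defensive.

Import GRing.Theory.
Local Open Scope ring_scope.

(* Node c [:: t1; ...; tp] = B_c(t1 ... tp) (ordered children).         *)
Inductive tree (C : Type) := Node of C & seq (tree C).
Arguments Node {C}.

Section TreeCount.
Variable C : countType.

Fixpoint tree_enc (t : tree C) : GenTree.tree C :=
  let: Node c ts := t in GenTree.Node 0 (GenTree.Leaf c :: map tree_enc ts).

Fixpoint tree_dec (g : GenTree.tree C) : option (tree C) :=
  match g with
  | GenTree.Node _ (GenTree.Leaf c :: gs) =>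
      let fix decs (gs : seq (GenTree.tree C)) : option (seq (tree C)) :=
          match gs with
          | [::] => Some [::]
          | g1 :: gs' =>
              match tree_dec g1, decs gs' with
              | Some t, Some ts => Some (t :: ts)
              | _, _ => None
              end
          end in
      omap (Node c) (decs gs)
  | _ => None
  end.

Definition tree_rect' (P : tree C -> Type)
  (f : forall c ts, foldr (fun t acc => (P t * acc)%type) unit ts -> P (Node c ts)) :
  forall t, P t :=
  fix F t := match t with
    Node c ts => f c ts ((fix G ts :=
       match ts return foldr (fun t acc => (P t * acc)%type) unit ts with
       | [::] => tt
       | t1 :: ts' => (F t1, G ts')
       end) ts)
  end.

Lemma tree_encK : pcancel tree_enc tree_dec.
Proof.
elim/tree_rect' => c ts IH /=.
suff -> : (fix decs (gs : seq (GenTree.tree C)) : option (seq (tree C)) :=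
          match gs with
          | [::] => Some [::]
          | g1 :: gs' =>
              match tree_dec g1, decs gs' with
              | Some t, Some ts => Some (t :: ts)
              | _, _ => None
              end
          end) (map tree_enc ts) = Some ts by [].
elim: ts IH => [|t ts IHts] //= [-> /IHts ->] //.
Qed.

HB.instance Definition _ := Countable.copy (tree C) (pcan_type tree_encK).
End TreeCount.

(* Left grafting  t ↷ s = sum_v t ↷_v s, as the list of resulting trees *)
(* (with multiplicity): t is attached to vertex v as its new leftmost  *)
(* child.                                                              *)
Fixpoint graft (C : Type) (t s : tree C) : seq (tree C) :=
  let: Node c ts := s in
  Node c (t :: ts) ::
  (fix go (pre ts : seq (tree C)) : seq (tree C) :=
     match ts with
     | [::] => [::]
     | s1 :: rest =>
         [seq Node c (rev pre ++ s' :: rest) | s' <- graft t s1] ++ go (s1 :: pre) rest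
     end) [::] ts.

(* The tensor algebra T(T_C) = k<T_C>, free associative algebra over the *)
(* vector space spanned by trees: the free k-module on words of trees.  *)
(* It is the universal enveloping algebra U of Lie(T_C).                *)
Section Algebra.
Variables (k : fieldType) (C : finType).

Definition word := seq (tree C).
Definition TA := {freeg word / k}.

Definition bw (w : word) : TA := << w >>.
Definition treeA (t : tree C) : TA := bw [:: t].
Definition bullet (c : C) : tree C := Node c [::].

Definition lin (f : word -> TA) (a : TA) : TA :=
  \sum_(u <- dom a) coeff u a *: f u.

Definition mulA (a b : TA) : TA :=
  lin (fun u => lin (fun v => bw (u ++ v)) b) a.
Definition wordA (w : word) : TA := bw w.
Definition bracketA (a b : TA) : TA := mulA a b - mulA b a.

Definition graftA (t s : tree C) : TA := \sum_(s' <- graft t s) treeA s'.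

(* t ↷ w for a tree t and a word w: the derivation extending grafting *)
Fixpoint Dw (t : tree C) (w : word) : TA :=
  match w with
  | [::] => 0
  | t1 :: w' =>
      \sum_(s' <- graft t t1) bw (s' :: w')
      + lin (fun u => bw (t1 :: u)) (Dw t w')
  end.
Definition D (t : tree C) (a : TA) : TA := lin (Dw t) a.

(* action of a word of U on T(T_C):
   1 ↷ y = y,  (t · w) ↷ y = t ↷ (w ↷ y) - (t ↷ w) ↷ y. *)
Fixpoint actw (n : nat) (w : word) (y : TA) : TA :=
  match n, w with
  | _, [::] => y
  | 0, _ :: _ => 0
  | n'.+1, t :: w' => D t (actw n' w' y) - lin (fun u => actw n' u y) (Dw t w')
  end.
Definition act (a y : TA) : TA := lin (fun w => actw (size w) w y) a.

(* Lie(T_C): the Lie subalgebra of T(T_C) generated by T_C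
   (the free Lie algebra on the vector space T_C). *)
Inductive isLie : TA -> Prop :=
| isLie_tree t : isLie (treeA t)
| isLie0 : isLie 0
| isLieD a b : isLie a -> isLie b -> isLie (a + b)
| isLieZ (x : k) a : isLie a -> isLie (x *: a)
| isLieBr a b : isLie a -> isLie b -> isLie (bracketA a b).

Definition LieT := {a : TA | isLie a}.

Definition lzero : LieT := exist _ 0 isLie0.
Definition ladd (x y : LieT) : LieT := exist _ (sval x + sval y) (isLieD (proj2_sig x) (proj2_sig y)).
Definition lscale (c : k) (x : LieT) : LieT := exist _ (c *: sval x) (isLieZ c (proj2_sig x)).
Definition lsub (x y : LieT) : LieT := ladd x (lscale (-1) y).
Definition lbr (x y : LieT) : LieT :=
  exist _ (bracketA (sval x) (sval y)) (isLieBr (proj2_sig x) (proj2_sig y)).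

(* projection of T(T_C) onto Lie(T_C); it is only applied to elements
   that lie in Lie(T_C), where it is the identity. *)
Definition lproj (a : TA) : LieT :=
  match excluded_middle_informative (isLie a) with
  | left h => exist _ a h
  | right _ => lzero
  end.

Definition lact (x y : LieT) : LieT := lproj (act (sval x) (sval y)).

Definition Endo := LieT -> LieT.

Definition eadd (f g : Endo) : Endo := fun z => ladd (f z) (g z).
Definition escale (c : k) (f : Endo) : Endo := fun z => lscale c (f z).
Definition ecomp (f g : Endo) : Endo := fun z => f (g z).
Definition eid : Endo := fun z => z.

Definition dop (X : LieT) : Endo := fun Z => lact Z X.
Definition delta (X : LieT) : Endo := fun Z => lbr X Z.
Definition nabla (X : LieT) (nu : Endo) : Endo :=
  fun Y => lsub (lact X (nu Y)) (nu (lact X Y)).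
Definition nablas (Xs : seq LieT) (nu : Endo) : Endo := foldr nabla nu Xs.

Inductive subalg_gen (S : Endo -> Prop) : Endo -> Prop :=
| sag_base f : S f -> subalg_gen S f
| sag_id : subalg_gen S eid
| sag_add f g : subalg_gen S f -> subalg_gen S g -> subalg_gen S (eadd f g)
| sag_scale c f : subalg_gen S f -> subalg_gen S (escale c f)
| sag_comp f g : subalg_gen S f -> subalg_gen S g -> subalg_gen S (ecomp f g).

Inductive espan (S : Endo -> Prop) : Endo -> Prop :=
| esp_base f : S f -> espan S f
| esp_zero : espan S (fun _ => lzero)
| esp_add f g : espan S f -> espan S g -> espan S (eadd f g)
| esp_scale c f : espan S f -> espan S (escale c f).

Definition El_generator (f : Endo) : Prop :=
  exists (Xs : seq LieT) (Y : LieT), f = nablas Xs (dop Y) \/ f = nablas Xs (delta Y).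

Definition El : Endo -> Prop := subalg_gen El_generator.

(* tree with a free edge at the root B_c(t1 ... t_{j-1} × t_j ... t_p)
   (here ts = [:: t1; ...; tp], j0 = j - 1 trees before the slot),
   acting as x ↦ (t1 ⋯ t_{j-1} · x · t_j ⋯ t_p) ↷ •_c *)
Definition free_edge (c : C) (ts : seq (tree C)) (j0 : nat) : Endo :=
  fun x => lproj (act (mulA (mulA (wordA (take j0 ts)) (sval x)) (wordA (drop j0 ts)))
                      (treeA (bullet c))).

Definition hatT0 : Endo -> Prop :=
  espan (fun f => exists (c : C) (ts : seq (tree C)) (j0 : nat),
                    (j0 <= size ts)%N /\ f = free_edge c ts j0).

Definition delta_set (f : Endo) : Prop := exists x : LieT, f = delta x.

End Algebra.

(* Two facts drive the proof.  First, every Lie element X acts on U by a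
   derivation satisfying (X w) ~> y = X ~> (w ~> y) - (X ~> w) ~> y; this holds
   for trees by definition and passes to brackets by induction on the Lie degree,
   since the action of U preserves degrees.  Consequently nabla_X sends a tree
   with a free edge to a sum of three such trees, sends delta_Y to
   delta_(X ~> Y), and is a derivation for composition, so the algebra A
   generated by hatT0 and delta is nabla-stable.  Moreover d_Y lies in A:
   Z ~> B_c(t1 ... tp) = B_c(Z t1 ... tp) + sum_i B_c(t1 ... (Z ~> ti) ... tp)
   writes d of a tree through free-edge trees composed with d of its subtrees,
   and d_[a,b] = delta_a d_b - delta_b d_a.  Hence El is contained in A.
   Conversely x |-> (w x) ~> B_c lies in El by induction on w, as
   (t w x) ~> B_c = nabla_t ((w x) ~> B_c) - ((t ~> w) x) ~> B_c, and the slot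
   moves right through w1 x t w2 = w1 t x w2 - w1 [t, x] w2, i.e. by composing
   with delta_t. *)

From HB Require Import structures.
From Pilot Require Import Defs.
From mathcomp Require Import all_boot all_algebra.
From mathcomp Require Import freeg zify.
From Stdlib Require Import ClassicalEpsilon FunctionalExtensionality ProofIrrelevance.

Set Implicit Arguments.
Unset Strict Implicit.
Unset Printing Implicit Defensive.

Import GRing.Theory.
Local Open Scope ring_scope.

Section ZmodIdentities.
Variable V : zmodType.

Inductive zterm := ZVar of nat | ZAdd of zterm & zterm | ZOpp of zterm | ZZero.

Fixpoint zinterp (env : seq V) (e : zterm) : V :=
  match e with
  | ZVar n => nth 0 env n
  | ZAdd e1 e2 => zinterp env e1 + zinterp env e2
  | ZOpp e1 => - zinterp env e1
  | ZZero => 0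
  end.

Fixpoint zcoef_add (s t : seq int) : seq int :=
  match s, t with
  | [::], t => t
  | s, [::] => s
  | x :: s', y :: t' => (x + y) :: zcoef_add s' t'
  end.

(* [(zcoefs e)`_n] is the multiplicity of the variable [ZVar n] in [e]. *)
Fixpoint zcoefs (e : zterm) : seq int :=
  match e with
  | ZVar n => rcons (nseq n 0) 1
  | ZAdd e1 e2 => zcoef_add (zcoefs e1) (zcoefs e2)
  | ZOpp e1 => map -%R (zcoefs e1)
  | ZZero => [::]
  end.

Fixpoint zcombine (env : seq V) (s : seq int) : V :=
  if s is x :: s' then head 0 env *~ x + zcombine (behead env) s' else 0.

Lemma zcombine_add env s t :
  zcombine env (zcoef_add s t) = zcombine env s + zcombine env t.
Proof.
elim: s t env => [|x s IH] [|y t] env /=; rewrite ?add0r ?addr0 //.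
by rewrite IH mulrzDr addrACA.
Qed.

Lemma zcombine_opp env s : zcombine env (map -%R s) = - zcombine env s.
Proof.
elim: s env => [|x s IH] env /=; first by rewrite oppr0.
by rewrite IH mulrNz opprD.
Qed.

Lemma zcombine_var env n : zcombine env (rcons (nseq n 0) 1) = nth 0 env n.
Proof.
elim: n env => [|n IH] [|v env] /=; rewrite ?addr0 ?add0r ?mulr0z //.
by rewrite IH; case: n {IH}.
Qed.

Lemma zinterp_coefs env e : zinterp env e = zcombine env (zcoefs e).
Proof.
elim: e => [n|e1 IH1 e2 IH2|e1 IH1|] //=.
- by rewrite zcombine_var.
- by rewrite zcombine_add IH1 IH2.
- by rewrite zcombine_opp IH1.
Qed.

Lemma zcombine_zero env s : all (eq_op^~ 0) s -> zcombine env s = 0.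
Proof.
elim: s env => [|x s IH] env //= /andP[/eqP -> /IH ->].
by rewrite mulr0z add0r.
Qed.

Lemma zinterp_eq env e1 e2 :
  all (eq_op^~ 0) (zcoefs (ZAdd e1 (ZOpp e2))) -> zinterp env e1 = zinterp env e2.
Proof.
move=> /(zcombine_zero env); rewrite -zinterp_coefs /= => /eqP.
by rewrite subr_eq0 => /eqP.
Qed.

End ZmodIdentities.

Ltac zmod_mem x l :=
  match l with
  | ?y :: _ => let _ := match goal with _ => unify x y end in constr:(true)
  | _ :: ?l' => zmod_mem x l'
  | _ => constr:(false)
  end.

Ltac zmod_atoms t acc :=
  lazymatch t with
  | @GRing.add _ ?a ?b => let acc1 := zmod_atoms a acc in zmod_atoms b acc1
  | @GRing.opp _ ?a => zmod_atoms a acc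
  | @GRing.zero _ => acc
  | _ => lazymatch zmod_mem t acc with
         | true => acc
         | false => constr:(t :: acc)
         end
  end.

Ltac zmod_index x l :=
  match l with
  | ?y :: _ => let _ := match goal with _ => unify x y end in constr:(0%N)
  | _ :: ?l' => let n := zmod_index x l' in constr:(n.+1)
  end.

Ltac zmod_reify t env :=
  lazymatch t with
  | @GRing.add _ ?a ?b =>
      let ea := zmod_reify a env in let eb := zmod_reify b env in constr:(ZAdd ea eb)
  | @GRing.opp _ ?a => let ea := zmod_reify a env in constr:(ZOpp ea)
  | @GRing.zero _ => constr:(ZZero)
  | _ => let n := zmod_index t env in constr:(ZVar n)
  end.

Ltac zmod_eq :=
  lazymatch goal with
  | |- @eq ?T ?L ?R =>
      let env := zmod_atoms R ltac:(zmod_atoms L (@nil T)) in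
      let eL := zmod_reify L env in
      let eR := zmod_reify R env in
      change (zinterp env eL = zinterp env eR);
      apply: zinterp_eq; vm_compute; reflexivity
  end.

(** * The tensor algebra on trees *)

Section TreeAlgebra.
Variables (k : fieldType) (C : finType).
Local Notation TA := (TA k C).
Local Notation word := (word C).
Local Notation bw := (@Defs.bw k C).
Local Notation lin := (@Defs.lin k C).
Implicit Types (a b x y z : TA) (u v w : word) (f g : word -> TA) (F G : TA -> TA).

Lemma bw_scale c u : c *: bw u = << c *g u >>.
Proof. by apply/eqP/freeg_eqP => z; rewrite coeffZ !coeffU mul1r. Qed.

Lemma TA_ind (P : TA -> Prop) :
  P 0 -> (forall c u a, P a -> P (c *: bw u + a)) -> forall a, P a.
Proof.
move=> P0 PS; apply: freeg_ind_dom0 => // c u a _ _ Pa.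
by rewrite -bw_scale; apply: PS.
Qed.

HB.instance Definition _ f :=
  GRing.isZmodMorphism.Build TA TA (fglift f) (lift_is_additive f).

Lemma lin_fglift f a : lin f a = fglift f a.
Proof.
rewrite /Defs.lin -[in RHS](freeg_sumE a) raddf_sum.
by apply: eq_bigr => u _; rewrite [RHS]liftU.
Qed.

Lemma lin_bw f u : lin f (bw u) = f u.
Proof. by rewrite lin_fglift [LHS]liftU scale1r. Qed.

Lemma lin_scale_bw f c u : lin f (c *: bw u) = c *: f u.
Proof. by rewrite lin_fglift bw_scale [LHS]liftU. Qed.

Lemma lin0 f : lin f 0 = 0.
Proof. by rewrite lin_fglift raddf0. Qed.

Lemma linD f : {morph lin f : a b / a + b}.
Proof. by move=> a b; rewrite !lin_fglift raddfD. Qed.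

Lemma lin_is_linear f : linear (lin f).
Proof.
move=> c a b; rewrite linD; congr (_ + _).
elim/TA_ind: a => [|c' u a IH]; first by rewrite scaler0 lin0 scaler0.
by rewrite scalerDr scalerA !linD IH !lin_scale_bw scalerDr scalerA.
Qed.

HB.instance Definition _ f := GRing.isLinear.Build k TA TA *:%R (lin f) (lin_is_linear f).
Local Hint Resolve lin_is_linear : core.

Lemma lin_closed (P : TA -> Prop) :
    P 0 -> (forall a b, P a -> P b -> P (a + b)) -> (forall c a, P a -> P (c *: a)) ->
  forall f a, (forall u, P (f u)) -> P (lin f a).
Proof. by move=> P0 PD PZ f a Pf; apply: big_ind => // u _; apply: PZ. Qed.

Lemma lin_sum f I (r : seq I) (F : I -> TA) :
  lin f (\sum_(i <- r) F i) = \sum_(i <- r) lin f (F i).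
Proof. exact: linear_sum. Qed.

Lemma linear_bw_ext F G :
  linear F -> linear G -> (forall u, F (bw u) = G (bw u)) -> F =1 G.
Proof.
move=> LF LG FG; elim/TA_ind => [|c u a IH]; last by rewrite LF LG FG IH.
by rewrite -(subrr 0) (zmod_morphism_linear LF) (zmod_morphism_linear LG) !subrr.
Qed.

Lemma eq_lin f g : f =1 g -> lin f =1 lin g.
Proof. by move=> fg; apply: linear_bw_ext => // u; rewrite !lin_bw. Qed.

Lemma lin_addf f g a : lin (fun u => f u + g u) a = lin f a + lin g a.
Proof.
move: a; apply: linear_bw_ext => [//|c a b|u]; last by rewrite !lin_bw.
by rewrite !lin_is_linear scalerDr addrACA.
Qed.

Lemma lin_scalef c f a : lin (fun u => c *: f u) a = c *: lin f a.
Proof.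
move: a; apply: linear_bw_ext => [//|c' a b|u]; last by rewrite !lin_bw.
by rewrite !lin_is_linear scalerDr !scalerA mulrC.
Qed.

Lemma lin_comp f g a : lin f (lin g a) = lin (fun u => lin f (g u)) a.
Proof.
move: a; apply: linear_bw_ext => [c a b|//|u]; last by rewrite !lin_bw.
by rewrite !lin_is_linear.
Qed.

Lemma lin_bwK a : lin bw a = a.
Proof. by move: a; apply: linear_bw_ext => [//|c a b //|u]; rewrite lin_bw. Qed.

Local Notation mulA := (@Defs.mulA k C).
Local Notation treeA := (@Defs.treeA k C).
Local Notation graftA := (@Defs.graftA k C).
Local Notation Dw := (@Defs.Dw k C).
Local Notation D := (@Defs.D k C).
Local Notation act := (@Defs.act k C).
Local Notation actw := (@Defs.actw k C).
Local Notation bracketA := (@Defs.bracketA k C).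

Lemma mulA_bw u v : mulA (bw u) (bw v) = bw (u ++ v).
Proof. by rewrite /Defs.mulA !lin_bw. Qed.

Lemma mulA_is_linear a : linear (mulA a).
Proof.
move=> c x y; rewrite /Defs.mulA -lin_scalef -lin_addf.
by apply: eq_lin => u; apply: lin_is_linear.
Qed.

HB.instance Definition _ a :=
  GRing.isLinear.Build k TA TA *:%R (mulA a) (mulA_is_linear a).
Local Hint Resolve mulA_is_linear : core.

Lemma mulA0l a : mulA 0 a = 0. Proof. exact: linear0. Qed.
Lemma mulADl a x y : mulA (x + y) a = mulA x a + mulA y a. Proof. exact: linearD. Qed.
Lemma mulANl a x : mulA (- x) a = - mulA x a. Proof. exact: linearN. Qed.
Lemma mulABl a x y : mulA (x - y) a = mulA x a - mulA y a. Proof. exact: linearB. Qed.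
Lemma mulAZl a c x : mulA (c *: x) a = c *: mulA x a. Proof. exact: linearZ. Qed.

Lemma mulA0r a : mulA a 0 = 0. Proof. exact: linear0. Qed.
Lemma mulADr a x y : mulA a (x + y) = mulA a x + mulA a y. Proof. exact: linearD. Qed.
Lemma mulANr a x : mulA a (- x) = - mulA a x. Proof. exact: linearN. Qed.
Lemma mulABr a x y : mulA a (x - y) = mulA a x - mulA a y. Proof. exact: linearB. Qed.
Lemma mulAZr a c x : mulA a (c *: x) = c *: mulA a x. Proof. exact: linearZ. Qed.

Lemma mulA_assoc a b x : mulA (mulA a b) x = mulA a (mulA b x).
Proof.
move: a; apply: linear_bw_ext => [c y z|c y z|u].
- by rewrite !mulADl !mulAZl.
- by rewrite mulADl mulAZl.
move: b; apply: linear_bw_ext => [c y z|c y z|v].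
- by rewrite mulADr mulAZr mulADl mulAZl.
- by rewrite mulADl mulAZl mulADr mulAZr.
move: x; apply: linear_bw_ext => [c y z|c y z|w].
- by rewrite mulADr mulAZr.
- by rewrite !mulADr !mulAZr.
by rewrite !mulA_bw catA.
Qed.

Lemma mulA1l a : mulA (bw [::]) a = a.
Proof. by move: a; apply: linear_bw_ext => [c y z|//|u]; rewrite ?mulADr ?mulAZr ?mulA_bw. Qed.

Lemma mulA1r a : mulA a (bw [::]) = a.
Proof.
by move: a; apply: linear_bw_ext => [c y z|//|u]; rewrite ?mulADl ?mulAZl ?mulA_bw ?cats0.
Qed.

Lemma bw_cons t w : bw (t :: w) = mulA (treeA t) (bw w).
Proof. by rewrite mulA_bw. Qed.

Lemma mulA_suml I (r : seq I) (F : I -> TA) a :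
  mulA (\sum_(i <- r) F i) a = \sum_(i <- r) mulA (F i) a.
Proof. exact: linear_sum. Qed.

(** * Grafting and the action of U *)

HB.instance Definition _ t :=
  GRing.isLinear.Build k TA TA *:%R (D t) (lin_is_linear (Dw t)).

Lemma D_bw t w : D t (bw w) = Dw t w.
Proof. exact: lin_bw. Qed.

Lemma Dw_cons t t1 w :
  Dw t (t1 :: w) = mulA (graftA t t1) (bw w) + mulA (treeA t1) (Dw t w).
Proof.
rewrite /= /Defs.graftA mulA_suml; congr (_ + _).
  by apply: eq_bigr => s _; rewrite mulA_bw.
by move: (Dw t w); apply: linear_bw_ext => // u; rewrite lin_bw mulA_bw.
Qed.

Lemma D_treeA t s : D t (treeA s) = graftA t s.
Proof. by rewrite D_bw Dw_cons /= mulA1r mulA0r addr0. Qed.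

Lemma Dw_cat t u v : Dw t (u ++ v) = mulA (Dw t u) (bw v) + mulA (bw u) (Dw t v).
Proof.
elim: u => [|t1 u IH]; first by rewrite /= mulA0l add0r mulA1l.
rewrite cat_cons !Dw_cons IH mulADl !mulADr -!mulA_assoc addrA.
by rewrite (mulA_assoc (graftA t t1)) mulA_bw -!bw_cons.
Qed.

Lemma D_mulA t a b : D t (mulA a b) = mulA (D t a) b + mulA a (D t b).
Proof.
move: a; apply: linear_bw_ext => [c x y|c x y|u].
- by rewrite mulADl mulAZl linearP.
- by rewrite linearP mulADl mulAZl mulADl mulAZl scalerDr addrACA.
move: b; apply: linear_bw_ext => [c x y|c x y|v].
- by rewrite !linearP.
- by rewrite !linearP scalerDr addrACA.
by rewrite mulA_bw !D_bw Dw_cat.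
Qed.

(* [a] is a combination of words of length [n]. *)
Definition of_length n a :=
  forall f g, (forall u, size u = n -> f u = g u) -> lin f a = lin g a.

Lemma Dw_of_length t w : of_length (size w) (Dw t w).
Proof.
elim: w => [|t1 w IH] f g fg /=; first by rewrite !lin0.
rewrite !linD !lin_comp !lin_sum; congr (_ + _).
  by apply: eq_bigr => s _; rewrite !lin_bw fg.
by apply: IH => u size_u; rewrite !lin_bw fg //= size_u.
Qed.
Arguments Dw_of_length : clear implicits.

Lemma act_bw w y : act (bw w) y = actw (size w) w y.
Proof. exact: lin_bw. Qed.

Lemma act_of_length n a y f : of_length n a ->
  (forall u, size u = n -> act (bw u) y = f u) -> act a y = lin f a.
Proof. by move=> la fE; apply: la => u /fE <-; rewrite act_bw. Qed.

Lemma act_cons t w y : act (bw (t :: w)) y = D t (act (bw w) y) - act (Dw t w) y.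
Proof. by rewrite !act_bw /=; congr (_ - _); apply: Dw_of_length => u ->. Qed.

Lemma act_nil y : act (bw [::]) y = y.
Proof. exact: act_bw. Qed.

Lemma act_treeA t y : act (treeA t) y = D t y.
Proof. by rewrite act_cons act_nil /Defs.act lin0 subr0. Qed.

Lemma act0l y : act 0 y = 0. Proof. exact: linear0. Qed.
Lemma actDl y a b : act (a + b) y = act a y + act b y. Proof. exact: linearD. Qed.
Lemma actNl y a : act (- a) y = - act a y. Proof. exact: linearN. Qed.
Lemma actBl y a b : act (a - b) y = act a y - act b y. Proof. exact: linearB. Qed.
Lemma actZl y c a : act (c *: a) y = c *: act a y. Proof. exact: linearZ. Qed.

Lemma actw_is_linear n w : linear (actw n w).
Proof.
elim: n w => [|n IH] [|t w] c x y //=; first by rewrite scaler0 addr0.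
rewrite IH linearP (eq_lin (g := fun u => c *: actw n u x + actw n u y)); last first.
  by move=> u; rewrite IH.
by rewrite lin_addf lin_scalef scalerBr addrACA opprD.
Qed.

Lemma act_is_linear a : linear (act a).
Proof.
move=> c x y; rewrite /Defs.act -lin_scalef -lin_addf.
by apply: eq_lin => u; rewrite actw_is_linear.
Qed.

HB.instance Definition _ a :=
  GRing.isLinear.Build k TA TA *:%R (act a) (act_is_linear a).

Lemma act0r a : act a 0 = 0. Proof. exact: linear0. Qed.
Lemma actDr a x y : act a (x + y) = act a x + act a y. Proof. exact: linearD. Qed.
Lemma actBr a x y : act a (x - y) = act a x - act a y. Proof. exact: linearB. Qed.
Lemma actZr a c x : act a (c *: x) = c *: act a x. Proof. exact: linearZ. Qed.

Lemma bracketA0l b : bracketA 0 b = 0.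
Proof. by rewrite /Defs.bracketA mulA0l mulA0r subrr. Qed.

Lemma bracketA0r a : bracketA a 0 = 0.
Proof. by rewrite /Defs.bracketA mulA0l mulA0r subrr. Qed.

Lemma bracketADr a x y : bracketA a (x + y) = bracketA a x + bracketA a y.
Proof. by rewrite /Defs.bracketA mulADl mulADr; zmod_eq. Qed.

Lemma bracketAZr a c x : bracketA a (c *: x) = c *: bracketA a x.
Proof. by rewrite /Defs.bracketA mulAZl mulAZr scalerBr. Qed.

Lemma D_bracketA t a b : D t (bracketA a b) = bracketA (D t a) b + bracketA a (D t b).
Proof. by rewrite /Defs.bracketA linearB /= !D_mulA; zmod_eq. Qed.

(** * Lie elements act by post-Lie derivations *)

(* Lie polynomials in the trees of degree at most [n]: the degree is what makes
   the induction in [lie_le_postLie] well founded. *)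
Inductive lie_le : nat -> TA -> Prop :=
| lie_le_tree t : lie_le 1 (treeA t)
| lie_le0 n : lie_le n 0
| lie_leD n a b : lie_le n a -> lie_le n b -> lie_le n (a + b)
| lie_leZ n c a : lie_le n a -> lie_le n (c *: a)
| lie_le_bracket p q a b : lie_le p a -> lie_le q b -> lie_le (p + q) (bracketA a b)
| lie_leW m n a : (m <= n)%N -> lie_le m a -> lie_le n a.

Lemma lie_leB n a b : lie_le n a -> lie_le n b -> lie_le n (a - b).
Proof. by move=> la lb; apply: lie_leD la _; rewrite -scaleN1r; apply: lie_leZ. Qed.

Lemma lie_le_deg0 n a : lie_le n a -> n = 0%N -> a = 0.
Proof.
elim=> {n a} //.
- by move=> n a b _ IHa _ IHb n0; rewrite IHa // IHb // addr0.
- by move=> n c a _ IH n0; rewrite IH // scaler0.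
- by move=> p q a b _ IHa _ _ /eqP; rewrite addn_eq0 => /andP[/eqP/IHa -> _]; rewrite bracketA0l.
- by move=> m n a le_mn _ IH n0; apply: IH; move: le_mn; rewrite n0 leqn0 => /eqP.
Qed.

Lemma lie_le_isLie n a : lie_le n a -> isLie a.
Proof.
elim=> {n a} // [t|n|n a b _ ? _ ?|n c a _ ?|p q a b _ ? _ ?].
- exact: isLie_tree.
- exact: isLie0.
- exact: isLieD.
- exact: isLieZ.
- exact: isLieBr.
Qed.

Lemma isLie_lie_le a : isLie a -> exists n, lie_le n a.
Proof.
elim=> {a} [t||a b _ [m la] _ [n lb]|c a _ [n la]|a b _ [m la] _ [n lb]].
- by exists 1%N; apply: lie_le_tree.
- by exists 0%N; apply: lie_le0.
- by exists (maxn m n); apply: lie_leD; apply: lie_leW; [exact: leq_maxl | | exact: leq_maxr |].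
- by exists n; apply: lie_leZ.
- by exists (m + n)%N; apply: lie_le_bracket.
Qed.

Lemma graftA_lie_le t s : lie_le 1 (graftA t s).
Proof.
rewrite /Defs.graftA; elim: (graft t s) => [|s' r IH]; first by rewrite big_nil; apply: lie_le0.
by rewrite big_cons; apply: lie_leD => //; apply: lie_le_tree.
Qed.

Lemma D_lie_le t n y : lie_le n y -> lie_le n (D t y).
Proof.
elim=> {n y} [s|n|n a b _ la _ lb|n c a _ la|p q a b a_p Da b_q Db|m n a le_mn _ la].
- by rewrite D_treeA; apply: graftA_lie_le.
- by rewrite linear0; apply: lie_le0.
- by rewrite linearD; apply: lie_leD.
- by rewrite linearZ; apply: lie_leZ.
- by rewrite D_bracketA; apply: lie_leD; apply: lie_le_bracket.
- exact: lie_leW la.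
Qed.

Lemma lin_lie_le n f a : (forall u, lie_le n (f u)) -> lie_le n (lin f a).
Proof. by apply: lin_closed; [exact: lie_le0 | exact: lie_leD | exact: lie_leZ]. Qed.

Lemma act_bw_lie_le n y w : lie_le n y -> lie_le n (act (bw w) y).
Proof.
move=> ly; suff: forall m v, size v = m -> lie_le n (act (bw v) y) by apply.
elim=> [[] // _|m IH [] // t v [size_v]]; first by rewrite act_nil.
rewrite act_cons; apply: lie_leB; first exact/D_lie_le/IH.
rewrite (act_of_length (f := fun u => if size u == m then act (bw u) y else 0)
                       (Dw_of_length t v)); last by move=> u ->; rewrite size_v eqxx.
by apply: lin_lie_le => u; case: eqP => [/IH //|_]; apply: lie_le0.
Qed.

Lemma act_lie_le n a y : lie_le n y -> lie_le n (act a y).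
Proof. by move=> ly; apply: lin_lie_le => w; rewrite -act_bw; apply: act_bw_lie_le. Qed.

Lemma act_isLie a y : isLie y -> isLie (act a y).
Proof. by case/isLie_lie_le=> n /(act_lie_le a) /lie_le_isLie. Qed.

Definition derivation (F : TA -> TA) :=
  forall x y, F (mulA x y) = mulA (F x) y + mulA x (F y).

Definition act_module a :=
  forall b y, act (mulA a b) y = act a (act b y) - act (act a b) y.

Definition postLie_elt a := derivation (act a) /\ act_module a.

Lemma derivation_commutator F G H :
    {morph F : x y / x + y} -> {morph G : x y / x + y} ->
    derivation F -> derivation G -> derivation H ->
  derivation (fun x => F (G x) - G (F x) - H x).
Proof.
move=> FD GD dF dG dH x y.
rewrite dG dF FD GD !dF !dG dH !mulABl !mulABr.
zmod_eq.
Qed.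

Lemma act_bracketA a b y : act_module a -> act_module b ->
  act (bracketA a b) y = act a (act b y) - act b (act a y) - act (act a b - act b a) y.
Proof. by move=> ma mb; rewrite /Defs.bracketA !actBl ma mb; zmod_eq. Qed.

Lemma postLie_elt0 : postLie_elt 0.
Proof.
split=> [x y|b y]; first by rewrite !act0l mulA0l mulA0r addr0.
by rewrite mulA0l !act0l subr0.
Qed.

Lemma postLie_elt_lin c a b :
  postLie_elt a -> postLie_elt b -> postLie_elt (c *: a + b).
Proof.
move=> [da ma] [db mb]; split=> [x y|x y].
  by rewrite !actDl !actZl da db mulADl mulADr mulAZl mulAZr scalerDr; zmod_eq.
by rewrite mulADl mulAZl !actDl !actZl ma mb scalerBr; zmod_eq.
Qed.

Lemma postLie_eltB a b : postLie_elt a -> postLie_elt b -> postLie_elt (a - b).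
Proof. by move=> pa pb; rewrite addrC -scaleN1r; apply: postLie_elt_lin. Qed.

Lemma postLie_elt_tree t : postLie_elt (treeA t).
Proof.
split=> [x y|b y]; first by rewrite !act_treeA D_mulA.
move: b; apply: linear_bw_ext => [c x z|c x z|w].
- by rewrite mulADr mulAZr actDl actZl.
- by rewrite !act_treeA actDl actZl !linearP /= actDl actZl scalerBr; zmod_eq.
by rewrite -bw_cons act_cons !act_treeA D_bw.
Qed.

Lemma postLie_elt_bracketA a b : postLie_elt a -> postLie_elt b ->
  postLie_elt (act a b) -> postLie_elt (act b a) -> postLie_elt (bracketA a b).
Proof.
move=> [da ma] [db mb] pab pba.
have [de _] := postLie_eltB pab pba; have [[_ mab] [_ mba]] := (pab, pba).
split=> [x y|w y].
  rewrite !act_bracketA //.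
  by apply: (derivation_commutator (actDr a) (actDr b)).
rewrite !act_bracketA // /Defs.bracketA mulABl !mulA_assoc actBl.
rewrite (ma (mulA b w) y) (mb (mulA a w) y) (da b w) (db a w) !actDl.
rewrite (mab w y) (mba w y) (mb (act a w) y) (ma (act b w) y) (mb w y) (ma w y).
by rewrite !actBr !(actDl, actNl); zmod_eq.
Qed.

Lemma lie_le_postLie n m a : (m <= n)%N -> lie_le m a -> postLie_elt a.
Proof.
elim: n m a => [|n IHn] m a le_mn la.
  by move: le_mn; rewrite leqn0 => /eqP/(lie_le_deg0 la) ->; apply: postLie_elt0.
elim: la le_mn => {m a} [t|m|m a b _ IHa _ IHb|m c a _ IHa|p q a b la IHa lb IHb|m' m a le_m'm _ IHa] le_mn.
- exact: postLie_elt_tree.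
- exact: postLie_elt0.
- by rewrite -[a]scale1r; apply: postLie_elt_lin; [apply: IHa | apply: IHb].
- by rewrite -[_ *: _]addr0; apply: postLie_elt_lin; [apply: IHa | apply: postLie_elt0].
- have pa := IHa (leq_trans (leq_addr q p) le_mn).
  have pb := IHb (leq_trans (leq_addl p q) le_mn).
  have [p0|p_gt0] := posnP p; first by rewrite (lie_le_deg0 la p0) bracketA0l; apply: postLie_elt0.
  have [q0|q_gt0] := posnP q; first by rewrite (lie_le_deg0 lb q0) bracketA0r; apply: postLie_elt0.
  apply: postLie_elt_bracketA => //.
  + by apply: (IHn q); [lia | apply: act_lie_le].
  + by apply: (IHn p); [lia | apply: act_lie_le].
- exact/IHa/(leq_trans le_m'm).
Qed.

Lemma isLie_postLie a : isLie a -> postLie_elt a.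
Proof. by case/isLie_lie_le => n; apply: lie_le_postLie. Qed.

Lemma isLie_derivation a : isLie a -> derivation (act a).
Proof. by case/isLie_postLie. Qed.

Lemma isLie_act_module a : isLie a -> act_module a.
Proof. by case/isLie_postLie. Qed.

Lemma isLie_act_one a : isLie a -> act a (bw [::]) = 0.
Proof.
move/isLie_derivation/(_ (bw [::]) (bw [::])).
by rewrite !mulA1l mulA1r -{1}[act a _]addr0 => /addrI.
Qed.

Section GraftChildren.
Variables (c : C) (t : tree C).

Fixpoint graft_children (pre ts : seq (tree C)) : seq (tree C) :=
  if ts is s :: rest then
    [seq Node c (rev pre ++ s' :: rest) | s' <- graft t s] ++ graft_children (s :: pre) rest
  else [::].

End GraftChildren.

Lemma graft_Node t c ts : graft t (Node c ts) = Node c (t :: ts) :: graft_children c t [::] ts.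
Proof. by []. Qed.

Lemma graft_children_sum c t pre ts :
  \sum_(s <- graft_children c t pre ts) treeA s =
  lin (fun u => treeA (Node c (rev pre ++ u))) (Dw t ts).
Proof.
elim: ts pre => [|s rest IH] pre /=; first by rewrite big_nil lin0.
rewrite big_cat IH big_map linD lin_sum lin_comp; congr (_ + _).
  by apply: eq_bigr => s' _; rewrite lin_bw.
by apply: eq_lin => u; rewrite lin_bw rev_cons cat_rcons.
Qed.

Lemma act_bw_bullet c ts : act (bw ts) (treeA (bullet c)) = treeA (Node c ts).
Proof.
suff: forall n w, size w = n -> act (bw w) (treeA (bullet c)) = treeA (Node c w) by apply.
elim=> [[] // _|n IH [] // t w [size_w]]; first exact: act_nil.
rewrite act_cons IH // D_treeA /Defs.graftA graft_Node big_cons graft_children_sum.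
rewrite (act_of_length (f := fun u => treeA (Node c u)) (Dw_of_length t w)) ?addrK //.
by move=> u size_u; rewrite IH // size_u.
Qed.

(** * El is contained in the algebra generated by hatT0 and delta *)

Local Notation LieT := (@Defs.LieT k C).
Local Notation Endo := (@Defs.Endo k C).
Local Notation lzero := (@Defs.lzero k C).
Local Notation lsub := (@Defs.lsub k C).
Local Notation lproj := (@Defs.lproj k C).
Local Notation lact := (@Defs.lact k C).
Local Notation eadd := (@Defs.eadd k C).
Local Notation escale := (@Defs.escale k C).
Local Notation ecomp := (@Defs.ecomp k C).
Local Notation eid := (@Defs.eid k C).
Local Notation dop := (@Defs.dop k C).
Local Notation delta := (@Defs.delta k C).
Local Notation nabla := (@Defs.nabla k C).
Implicit Types (X Y Z : LieT).

Lemma lieT_eq X Y : sval X = sval Y -> X = Y.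
Proof. by case: X Y => [a ha] [b hb] /= eq_ab; subst b; rewrite (proof_irrelevance _ ha hb). Qed.

Lemma endo_ext (f g : Endo) : (forall Z, sval (f Z) = sval (g Z)) -> f = g.
Proof. by move=> fg; apply: functional_extensionality => Z; apply: lieT_eq. Qed.

Lemma lproj_val a : isLie a -> sval (lproj a) = a.
Proof. by rewrite /Defs.lproj; case: excluded_middle_informative. Qed.

Lemma lact_val X Y : sval (lact X Y) = act (sval X) (sval Y).
Proof. by rewrite /Defs.lact lproj_val //; apply: act_isLie; apply: proj2_sig. Qed.

Lemma lsub_val X Y : sval (lsub X Y) = sval X - sval Y.
Proof. by rewrite /= scaleN1r. Qed.

Lemma nabla_val X (f : Endo) Y :
  sval (nabla X f Y) = act (sval X) (sval (f Y)) - sval (f (lact X Y)).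
Proof. by rewrite lsub_val lact_val. Qed.

Lemma eadd_val (f g : Endo) Z : sval (eadd f g Z) = sval (f Z) + sval (g Z).
Proof. by []. Qed.

Lemma escale_val c (f : Endo) Z : sval (escale c f Z) = c *: sval (f Z).
Proof. by []. Qed.

Definition ezero : Endo := fun _ => lzero.

Lemma ezero_scale : ezero = escale 0 eid.
Proof. by apply: endo_ext => Z /=; rewrite scale0r. Qed.

(* A tree with a free edge at the root, with the words on either side of the
   slot generalized to arbitrary elements [a b] of U. *)
Definition free_edgeU (c : C) a b : Endo :=
  fun X => lproj (act (mulA (mulA a (sval X)) b) (treeA (bullet c))).

Lemma free_edgeU_val c a b X :
  sval (free_edgeU c a b X) = act (mulA (mulA a (sval X)) b) (treeA (bullet c)).
Proof. by rewrite lproj_val //; apply: act_isLie; apply: isLie_tree. Qed.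

Lemma free_edgeE c ts j :
  free_edge c ts j = free_edgeU c (bw (take j ts)) (bw (drop j ts)).
Proof. by []. Qed.

Definition endo_additive (f : Endo) :=
  forall X Y, sval (f (lsub X Y)) = sval (f X) - sval (f Y).

Lemma endo_additive_comp (f g : Endo) :
  endo_additive f -> endo_additive g -> endo_additive (ecomp f g).
Proof.
move=> af ag X Y; rewrite /Defs.ecomp -af; congr (sval (f _)).
by apply: lieT_eq; rewrite ag lsub_val.
Qed.

Lemma free_edgeU_additive c a b : endo_additive (free_edgeU c a b).
Proof. by move=> X Y; rewrite !free_edgeU_val lsub_val mulABr mulABl actBl. Qed.

Lemma delta_additive Y : endo_additive (delta Y).
Proof. by move=> X Z; rewrite /= bracketADr bracketAZr scaleN1r. Qed.

Lemma hatT0_additive (f : Endo) : hatT0 f -> endo_additive f.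
Proof.
elim=> {f} [f [c [ts [j [_ ->]]]]||f g _ af _ ag|c f _ af] X Y /=.
- exact: free_edgeU_additive.
- by rewrite subr0.
- by rewrite af ag; zmod_eq.
- by rewrite af scalerBr.
Qed.

Lemma nabla_eadd X (f g : Endo) : nabla X (eadd f g) = eadd (nabla X f) (nabla X g).
Proof. by apply: endo_ext => Z; rewrite /= !lact_val !scaleN1r actDr; zmod_eq. Qed.

Lemma nabla_escale X c (f : Endo) : nabla X (escale c f) = escale c (nabla X f).
Proof. by apply: endo_ext => Z; rewrite /= !lact_val !scaleN1r actZr scalerBr. Qed.

Lemma nabla_eid X : nabla X eid = ezero.
Proof. by apply: endo_ext => Z; rewrite nabla_val lact_val subrr. Qed.

Lemma nabla_ezero X : nabla X ezero = ezero.
Proof. by apply: endo_ext => Z; rewrite nabla_val act0r subrr. Qed.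

Lemma nabla_ecomp X (f g : Endo) : endo_additive f ->
  nabla X (ecomp f g) = eadd (ecomp (nabla X f) g) (ecomp f (nabla X g)).
Proof.
move=> af; apply: endo_ext => Z.
by rewrite nabla_val /= af !lact_val !scaleN1r; zmod_eq.
Qed.

Lemma nabla_free_edgeU X c a b : isLie (sval X) ->
  nabla X (free_edgeU c a b) =
  eadd (eadd (free_edgeU c (mulA (sval X) a) b) (free_edgeU c (act (sval X) a) b))
       (free_edgeU c a (act (sval X) b)).
Proof.
move=> /isLie_postLie [dX mX]; apply: endo_ext => Z.
rewrite nabla_val !eadd_val !free_edgeU_val lact_val.
rewrite -[act (sval X) (act _ _)](subrK (act (act (sval X) (mulA (mulA a (sval Z)) b)) (treeA (bullet c)))).
by rewrite -mX !dX !mulADl !actDl !mulA_assoc; zmod_eq.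
Qed.

Lemma nabla_delta X Y : isLie (sval X) -> nabla X (delta Y) = delta (lact X Y).
Proof.
move=> /isLie_derivation dX; apply: endo_ext => Z.
by rewrite nabla_val /= !lact_val /Defs.bracketA actBr !dX; zmod_eq.
Qed.

Definition hatT0_delta_alg := subalg_gen (fun f : Endo => hatT0 f \/ delta_set f).

Lemma alg_ezero : hatT0_delta_alg ezero.
Proof. by rewrite ezero_scale; apply/sag_scale/sag_id. Qed.

Lemma alg_delta Y : hatT0_delta_alg (delta Y).
Proof. by apply: sag_base; right; exists Y. Qed.

Lemma alg_additive (f : Endo) : hatT0_delta_alg f -> endo_additive f.
Proof.
elim=> {f} [f [/hatT0_additive //|[Y ->]]||f g _ af _ ag|c f _ af|f g _ af _ ag].
- exact: delta_additive.
- by move=> X Y; rewrite lsub_val.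
- by move=> X Y; rewrite !eadd_val af ag; zmod_eq.
- by move=> X Y; rewrite !escale_val af scalerBr.
- exact: endo_additive_comp.
Qed.

Lemma free_edgeU0l c b : free_edgeU c 0 b = ezero.
Proof. by apply: endo_ext => Z; rewrite free_edgeU_val !mulA0l act0l. Qed.

Lemma espan_free_edgeU_linl (S : Endo -> Prop) c f a b :
  (forall u, espan S (free_edgeU c (f u) b)) -> espan S (free_edgeU c (lin f a) b).
Proof.
apply: (lin_closed (P := fun a => espan S (free_edgeU c a b))).
- by rewrite free_edgeU0l; apply: esp_zero.
- move=> x y Sx Sy; have -> : free_edgeU c (x + y) b = eadd (free_edgeU c x b) (free_edgeU c y b).
    by apply: endo_ext => Z; rewrite eadd_val !free_edgeU_val !mulADl actDl.
  exact: esp_add.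
- move=> e x Sx; have -> : free_edgeU c (e *: x) b = escale e (free_edgeU c x b).
    by apply: endo_ext => Z; rewrite escale_val !free_edgeU_val !mulAZl actZl.
  exact: esp_scale.
Qed.

Lemma espan_free_edgeU_linr (S : Endo -> Prop) c f a b :
  (forall u, espan S (free_edgeU c a (f u))) -> espan S (free_edgeU c a (lin f b)).
Proof.
apply: (lin_closed (P := fun b => espan S (free_edgeU c a b))).
- have -> : free_edgeU c a 0 = ezero.
    by apply: endo_ext => Z; rewrite free_edgeU_val mulA0r act0l.
  exact: esp_zero.
- move=> x y Sx Sy; have -> : free_edgeU c a (x + y) = eadd (free_edgeU c a x) (free_edgeU c a y).
    by apply: endo_ext => Z; rewrite eadd_val !free_edgeU_val mulADr actDl.
  exact: esp_add.
- move=> e x Sx; have -> : free_edgeU c a (e *: x) = escale e (free_edgeU c a x).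
    by apply: endo_ext => Z; rewrite escale_val !free_edgeU_val mulAZr actZl.
  exact: esp_scale.
Qed.

Lemma hatT0_free_edgeU c a b : hatT0 (free_edgeU c a b).
Proof.
rewrite -(lin_bwK a) -(lin_bwK b).
apply: espan_free_edgeU_linl => u; apply: espan_free_edgeU_linr => v; apply: esp_base.
exists c, (u ++ v), (size u); split; first by rewrite size_cat leq_addr.
by rewrite free_edgeE take_size_cat // drop_size_cat.
Qed.

Lemma alg_free_edgeU c a b : hatT0_delta_alg (free_edgeU c a b).
Proof. by apply: sag_base; left; apply: hatT0_free_edgeU. Qed.

Lemma alg_nabla X (f : Endo) : isLie (sval X) ->
  hatT0_delta_alg f -> hatT0_delta_alg (nabla X f).
Proof.
move=> lX; elim=> {f} [f [hf|[Y ->]]||f g _ af _ ag|c f _ af|f g alg_f af alg_g ag].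
- elim: hf => {f} [f [c [ts [j [_ ->]]]]||f g _ af _ ag|c f _ af].
  + rewrite free_edgeE nabla_free_edgeU //.
    by apply: sag_add; [apply: sag_add|]; apply: alg_free_edgeU.
  + by rewrite -/ezero nabla_ezero; apply: alg_ezero.
  + by rewrite nabla_eadd; apply: sag_add.
  + by rewrite nabla_escale; apply: sag_scale.
- by rewrite nabla_delta //; apply: alg_delta.
- by rewrite nabla_eid; apply: alg_ezero.
- by rewrite nabla_eadd; apply: sag_add.
- by rewrite nabla_escale; apply: sag_scale.
- by rewrite nabla_ecomp; [apply: sag_add; apply: sag_comp | apply: alg_additive].
Qed.

Definition treeL t : LieT := exist _ (treeA t) (@isLie_tree k C t).

(* For [a = 1] these are the terms of [Z ~> B_c(w)] in which [Z] is grafted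
   into one of the subtrees [w]. *)
Definition subtree_graft (c : C) a w : Endo :=
  fun Z => lproj (act (mulA a (act (sval Z) (bw w))) (treeA (bullet c))).

Lemma subtree_graft_val c a w Z :
  sval (subtree_graft c a w Z) = act (mulA a (act (sval Z) (bw w))) (treeA (bullet c)).
Proof. by rewrite lproj_val //; apply: act_isLie; apply: isLie_tree. Qed.

Lemma alg_subtree_graft c w :
  foldr (fun t (P : Type) => (hatT0_delta_alg (dop (treeL t)) * P)%type) unit w ->
  forall a, hatT0_delta_alg (subtree_graft c a w).
Proof.
elim: w => [_|t w IH [alg_t alg_w]] a.
  have -> : subtree_graft c a [::] = ezero.
    apply: endo_ext => Z; rewrite subtree_graft_val isLie_act_one ?mulA0r ?act0l //.
    exact: proj2_sig.
  exact: alg_ezero.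
have -> : subtree_graft c a (t :: w) =
    eadd (ecomp (free_edgeU c a (bw w)) (dop (treeL t))) (subtree_graft c (mulA a (treeA t)) w).
  apply: endo_ext => Z; rewrite eadd_val /Defs.ecomp !subtree_graft_val free_edgeU_val lact_val.
  by rewrite bw_cons (isLie_derivation (proj2_sig Z)) mulADr actDl !mulA_assoc.
by apply: sag_add; [apply: sag_comp; [apply: alg_free_edgeU|] | apply: IH].
Qed.

Lemma alg_dop_tree t : hatT0_delta_alg (dop (treeL t)).
Proof.
elim/tree_rect': t => c ts alg_ts.
have -> : dop (treeL (Node c ts)) = eadd (free_edgeU c (bw [::]) (bw ts)) (subtree_graft c (bw [::]) ts).
  apply: endo_ext => Z; rewrite eadd_val lact_val free_edgeU_val subtree_graft_val /=.
  by rewrite -act_bw_bullet !mulA1l (isLie_act_module (proj2_sig Z)) subrK.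
by apply: sag_add; [apply: alg_free_edgeU | exact: alg_subtree_graft].
Qed.

Lemma alg_dop Y : hatT0_delta_alg (dop Y).
Proof.
suff: forall a, isLie a -> forall Y, sval Y = a -> hatT0_delta_alg (dop Y).
  by apply; [apply: proj2_sig|].
move=> {Y} a; elim=> {a} [t||a b la IHa lb IHb|c a la IHa|a b la IHa lb IHb] Y Ya.
- by rewrite (@lieT_eq Y (treeL t) Ya); apply: alg_dop_tree.
- have -> : dop Y = ezero by apply: endo_ext => Z; rewrite lact_val Ya act0r.
  exact: alg_ezero.
- have -> : dop Y = eadd (dop (exist _ a la)) (dop (exist _ b lb)).
    by apply: endo_ext => Z; rewrite eadd_val !lact_val Ya actDr.
  by apply: sag_add; [apply: IHa | apply: IHb].
- have -> : dop Y = escale c (dop (exist _ a la)).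
    by apply: endo_ext => Z; rewrite escale_val !lact_val Ya actZr.
  by apply: sag_scale; apply: IHa.
pose A : LieT := exist _ a la; pose B : LieT := exist _ b lb.
have -> : dop Y = eadd (escale (-1) (ecomp (delta B) (dop A))) (ecomp (delta A) (dop B)).
  apply: endo_ext => Z; rewrite eadd_val escale_val /Defs.ecomp /= !lact_val Ya.
  by rewrite /Defs.bracketA actBr !(isLie_derivation (proj2_sig Z)) scaleN1r; zmod_eq.
apply: sag_add; [apply: sag_scale|]; apply: sag_comp; try apply: alg_delta.
- exact: IHa.
- exact: IHb.
Qed.

Lemma alg_nablas Xs (f : Endo) :
  hatT0_delta_alg f -> hatT0_delta_alg (@Defs.nablas k C Xs f).
Proof. by move=> alg_f; elim: Xs => //= X Xs IH; apply: alg_nabla => //; apply: proj2_sig. Qed.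

Lemma El_alg (f : Endo) : El f -> hatT0_delta_alg f.
Proof.
elim=> {f} [f [Xs [Y [->| ->]]]||f g _ af _ ag|c f _ af|f g _ af _ ag].
- exact/alg_nablas/alg_dop.
- exact/alg_nablas/alg_delta.
- exact: sag_id.
- exact: sag_add.
- exact: sag_scale.
- exact: sag_comp.
Qed.

(** * The converse inclusion *)

Definition El_span := espan (@El_generator k C).

Lemma El_ezero : El ezero.
Proof. by rewrite ezero_scale; apply/sag_scale/sag_id. Qed.

Lemma El_span_El (f : Endo) : El_span f -> El f.
Proof.
elim=> {f} [f gen_f||f g _ Ef _ Eg|c f _ Ef].
- exact: sag_base.
- exact: El_ezero.
- exact: sag_add.
- exact: sag_scale.
Qed.

Lemma El_span_nabla X (f : Endo) : El_span f -> El_span (nabla X f).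
Proof.
elim=> {f} [f [Xs [Y [->| ->]]]||f g _ Ef _ Eg|c f _ Ef].
- by apply: esp_base; exists (X :: Xs), Y; left.
- by apply: esp_base; exists (X :: Xs), Y; right.
- by rewrite -/ezero nabla_ezero; apply: esp_zero.
- by rewrite nabla_eadd; apply: esp_add.
- by rewrite nabla_escale; apply: esp_scale.
Qed.

Lemma El_span_free_edgeU_1 c w : El_span (free_edgeU c (bw w) (bw [::])).
Proof.
suff: forall n v, size v = n -> El_span (free_edgeU c (bw v) (bw [::])) by apply.
elim=> [[] // _|n IH [] // t v [size_v]].
  have -> : free_edgeU c (bw [::]) (bw [::]) = dop (treeL (bullet c)).
    by apply: endo_ext => Z; rewrite free_edgeU_val lact_val mulA1l mulA1r.
  by apply: esp_base; exists [::], (treeL (bullet c)); left.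
have -> : free_edgeU c (bw (t :: v)) (bw [::]) =
    eadd (nabla (treeL t) (free_edgeU c (bw v) (bw [::])))
         (escale (-1) (free_edgeU c (Dw t v) (bw [::]))).
  apply: endo_ext => Z; rewrite eadd_val escale_val nabla_val !free_edgeU_val lact_val /=.
  have [_ mt] := postLie_elt_tree t.
  by rewrite bw_cons !mulA1r mulA_assoc mt !act_treeA D_mulA D_bw actDl scaleN1r; zmod_eq.
apply: esp_add; first exact/El_span_nabla/IH.
apply/esp_scale; rewrite -(lin_bwK (Dw t v)).
rewrite (Dw_of_length t v bw (fun u => if size u == n then bw u else 0)); last first.
  by move=> u ->; rewrite size_v eqxx.
apply: espan_free_edgeU_linl => u; case: eqP => [/IH //|_].
by rewrite free_edgeU0l; apply: esp_zero.
Qed.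

Lemma El_free_edgeU_bw c w1 w2 : El (free_edgeU c (bw w1) (bw w2)).
Proof.
elim: w2 w1 => [|t w2 IH] w1; first exact/El_span_El/El_span_free_edgeU_1.
have -> : free_edgeU c (bw w1) (bw (t :: w2)) =
    eadd (free_edgeU c (bw (rcons w1 t)) (bw w2))
         (ecomp (free_edgeU c (bw w1) (bw w2)) (escale (-1) (delta (treeL t)))).
  apply: endo_ext => Z; rewrite eadd_val /Defs.ecomp !free_edgeU_val escale_val /=.
  rewrite bw_cons -cats1 -mulA_bw -actDl; congr (act _ _).
  rewrite /Defs.bracketA scaleN1r mulANr mulANl mulABr mulABl !mulA_assoc; zmod_eq.
apply: sag_add; first exact: IH.
by apply: sag_comp; [exact: IH | apply/sag_scale/sag_base; exists [::], (treeL t); right].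
Qed.

Lemma hatT0_El (f : Endo) : hatT0 f -> El f.
Proof.
elim=> {f} [f [c [ts [j [_ ->]]]]||f g _ Ef _ Eg|c f _ Ef].
- by rewrite free_edgeE; apply: El_free_edgeU_bw.
- exact: El_ezero.
- exact: sag_add.
- exact: sag_scale.
Qed.

Lemma alg_El (f : Endo) : hatT0_delta_alg f -> El f.
Proof.
elim=> {f} [f [/hatT0_El //|[Y ->]]||f g _ Ef _ Eg|c f _ Ef|f g _ Ef _ Eg].
- by apply: sag_base; exists [::], Y; right.
- exact: sag_id.
- exact: sag_add.
- exact: sag_scale.
- exact: sag_comp.
Qed.

End TreeAlgebra.

Theorem lemma5p4 (k : fieldType) (C : finType) :
  [pchar k] =i pred0 ->
  forall f : Endo k C,
    El f <-> subalg_gen (fun g => hatT0 g \/ delta_set g) f.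
Proof. by move=> _ f; split; [exact: El_alg | exact: alg_El]. Qed.
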